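(* Let $p\ge 1$ and $m\ge 2$ be integers, and let $\mathbf{x}_1,\dots,\mathbf{x}_p\in\mathbb{R}^2$ be given nodes (neighbours of the origin $\mathbf{x}_0=\mathbf{0}$). Let $\varphi_1,\dots,\varphi_n$ be an enumeration of the set $$\Psi=\{x,\ y,\ x^2,\ xy,\ y^2,\ \dots,\ x^m,\ x^{m-1}y,\ \dots,\ y^m\}$$ of all monomials in $(x,y)$ of total degree between $1$ and $m$ (so $n=\binom{m+2}{2}-1$), ordered by nondecreasing degree. For $r>0$ define the $n\times p$ matrix $\Phi(r)$ by $\Phi(r)_{ik}=\varphi_i(r\mathbf{x}_k)$, set $\Phi=\Phi(1)$, and let $\mathbf{Y}=(\Delta\varphi_1(\mathbf{0}),\dots,\Delta\varphi_n(\mathbf{0}))^{\mathrm T}\in\mathbb{R}^n$. Assume $\Phi$ has full column rank $p$ (so that for every $r>0$ the linear system $\mathbf{Y}=\Phi(r)\boldsymbol{\omega}$ has a unique least-squares solution). Let $\boldsymbol{\omega}_r\in\mathbb{R}^p$ be this least-squares solution, i.e. the unique minimizer of $\|\mathbf{Y}-\Phi(r)\boldsymbol{\omega}\|_2$, and put $\boldsymbol{\eta}_r=r^2\boldsymbol{\omega}_r$. Then: 1) $\boldsymbol{\eta}_r$ is bounded as $r\to 0^+$, i.e. there exist $r_0>0$ and $C>0$ such that $\|\boldsymbol{\eta}_r\|\le C$ for all $r\in(0,r_0]$. 2) If $r_n\to 0^+$ and $\boldsymbol{\eta}=\lim_{n\to\infty}\boldsymbol{\eta}_{r_n}$ exists,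 then $\boldsymbol{\eta}$ is an approximation of the Laplacian $\Delta$ at $\mathbf{0}$ of the largest possible order, i.e. the order of $\boldsymbol{\eta}$ equals $\max_{\boldsymbol{\zeta}\in\mathbb{R}^p}\operatorname{ord}(\boldsymbol{\zeta})$.
   Context: Notation: $\Delta=\partial_x^2+\partial_y^2$ is the Laplacian on $\mathbb{R}^2$; thus $\Delta\varphi(\mathbf 0)=2$ for $\varphi\in\{x^2,y^2\}$ and $\Delta\varphi(\mathbf 0)=0$ for every other monomial in $\Psi$. A weight vector $\boldsymbol{\zeta}=(\zeta_1,\dots,\zeta_p)^{\mathrm T}\in\mathbb{R}^p$ defines the discrete Laplace approximation at $\mathbf 0$, $u\mapsto \sum_{k=1}^p \zeta_k\,[u(\mathbf{x}_k)-u(\mathbf 0)]$ (for the scaled nodes $r\mathbf{x}_k$ one uses $u\mapsto r^{-2}\sum_k\zeta_k[u(r\mathbf{x}_k)-u(\mathbf 0)]$). Order of approximation: $\boldsymbol{\zeta}$ is an approximation of $\Delta$ at $\mathbf 0$ of order $l$ ($0\le l\le m$), written $\operatorname{ord}(\boldsymbol{\zeta})=l$, if $l$ is the largest integer in $\{0,\dots,m\}$ such that $\sum_{k=1}^p\zeta_k\,\varphi(\mathbf{x}_k)=\Delta\varphi(\mathbf 0)$ holds for every monomial $\varphi\in\Psi$ of degree $\le l$ (the condition for $l=0$ is vacuous). Equivalently, by homogeneity $\varphi(r\mathbf{x})=r^{\deg\varphi}\varphi(\mathbf{x})$, the scaled operator $r^{-2}\sum_k\zeta_k[\varphi(r\mathbf{x}_k)-\varphi(\mathbf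 0)]$ reproduces $\Delta\varphi(\mathbf 0)$ exactly for all monomials of degree $\le l$, so that for polynomials $u$ the error $\Delta u(\mathbf 0)-r^{-2}\sum_k\zeta_k[u(r\mathbf{x}_k)-u(\mathbf 0)]$ is $O(r^{l-1})$ as $r\to0$. *)

From HB Require Import structures.
From mathcomp Require Import all_boot all_order all_algebra.
From mathcomp Require Import all_classical all_reals all_analysis.
Set Implicit Arguments. Unset Strict Implicit. Unset Printing Implicit Defensive.
Import Order.TTheory GRing.Theory Num.Theory.
Local Open Scope ring_scope.

(* A monomial x^a y^b is encoded by its exponent pair (a, b). *)
Definition mono_list (m : nat) : seq (nat * nat) :=
  flatten [seq [seq ((d - j)%N, j) | j <- iota 0 d.+1] | d <- iota 1 m].

Definition nmono (m : nat) : nat := size (mono_list m).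

Definition mono (m : nat) (i : 'I_(nmono m)) : nat * nat :=
  nth (0%N, 0%N) (mono_list m) i.

Definition mono_eval {R : ringType} (e : nat * nat) (v : R * R) : R :=
  v.1 ^+ e.1 * v.2 ^+ e.2.

(* Laplacian of x^a y^b at the origin: 2 for x^2 and y^2, 0 otherwise. *)
Definition lap0 {R : ringType} (e : nat * nat) : R :=
  if (e == (2, 0)%N) || (e == (0, 2)%N) then 2 else 0.

Definition Phi {R : ringType} (m p : nat) (xs : 'I_p -> R * R) (r : R)
  : 'M[R]_(nmono m, p) :=
  \matrix_(i < nmono m, k < p) mono_eval (mono i) (r * (xs k).1, r * (xs k).2).

Definition Yvec (R : ringType) (m : nat) : 'cV[R]_(nmono m) :=
  \col_(i < nmono m) lap0 (mono i).

Definition norm2 {R : realType} (n : nat) (v : 'cV[R]_n) : R :=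
  Num.sqrt (\sum_(i < n) v i 0 ^+ 2).

Definition is_lsq {R : realType} (n p : nat) (A : 'M[R]_(n, p))
  (b : 'cV[R]_n) (w : 'cV[R]_p) : Prop :=
  forall w' : 'cV[R]_p, norm2 (b - A *m w) <= norm2 (b - A *m w').

Definition exact_upto {R : realType} (m p : nat) (xs : 'I_p -> R * R)
  (zeta : 'cV[R]_p) (l : nat) : bool :=
  all (fun e : nat * nat => ((e.1 + e.2 <= l)%N) ==>
         ((\sum_(k < p) zeta k 0 * mono_eval e (xs k)) == lap0 e))
      (mono_list m).

(* ord(zeta): the largest l in {0,...,m} with exact_upto zeta l
   (l = 0 always qualifies, the condition being vacuous). *)
Definition ord {R : realType} (m p : nat) (xs : 'I_p -> R * R)
  (zeta : 'cV[R]_p) : nat :=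
  \max_(l < m.+1 | exact_upto m xs zeta l) (l : nat).

(* Up to the factor r^4, the least-squares error of w at scale r is
   sum_i r^(2 deg phi_i) (Delta phi_i(0) - sum_k eta_k phi_i(x_k))^2, so eta_r minimises
   this weighted error and its weighted residual is orthogonal to the weighted stencil
   values of every z.
   Maximal order: if zeta is exact up to degree l, the weighted error of zeta only involves
   monomials of degree > l, so the residual of eta_r on any monomial of degree <= l is O(r)
   and vanishes in the limit.
   Boundedness: if eta_r blew up along r_n -> 0, a cluster point u of eta/|eta| would be a
   unit vector; by full rank some monomial has a nonzero stencil value on u.  Dividing the
   orthogonality relation for z = u by |eta| r^(2D), D the least such degree, and letting
   n -> oo leaves minus the sum of squares of these degree-D values, which must be 0. *)

From HB Require Import structures.
From mathcomp Require Import all_boot all_order all_algebra.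
From mathcomp Require Import all_classical all_reals all_analysis.
From mathcomp Require Import ring lra.
Import Order.TTheory GRing.Theory Num.Theory.
Import numFieldNormedType.Exports.
Local Open Scope classical_set_scope.
Local Open Scope ring_scope.

Lemma increasing_seq_comp (f g : nat -> nat) :
  increasing_seq f -> increasing_seq g -> increasing_seq (f \o g).
Proof. by move=> fi gi a b /=; rewrite fi; exact: gi. Qed.

Lemma increasing_seq_ge {f : nat -> nat} : increasing_seq f -> forall n, (n <= f n)%N.
Proof.
move=> /increasing_seqP fS; elim=> [//|n IH].
exact: leq_ltn_trans IH (fS n).
Qed.

Lemma increasing_seq_cvg {f : nat -> nat} : increasing_seq f -> f @ \oo --> \oo.
Proof.
move=> fi A [N _ NA]; exists N => // n /= Nn; apply: NA => /=.
exact: leq_trans Nn (increasing_seq_ge fi n).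
Qed.

Lemma bolzano_weierstrass_fin (R : realType) (p : nat) (u : nat -> 'I_p -> R) (M : R) :
  (forall n k, `|u n k| <= M) ->
  exists2 f : nat -> nat, increasing_seq f & forall k, cvgn (fun n => u (f n) k).
Proof.
move=> uM.
suff /(_ p (leqnn p)) [f fi fc] : forall q, (q <= p)%N -> exists2 f : nat -> nat,
    increasing_seq f & forall k : 'I_p, (k < q)%N -> cvgn (fun n => u (f n) k).
  by exists f => // k; exact: fc.
elim=> [|q IH] qp; first by exists id.
have [f fi fc] := IH (ltnW qp).
have uf_bounded : bounded_fun (fun n => u (f n) (Ordinal qp)).
  rewrite /bounded_near; near=> N => x _ /=.
  apply: le_trans (uM _ _) _; near: N.
  exact: nbhs_pinfty_ge (num_real M).
have [g gi gc] := bolzano_weierstrass uf_bounded.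
exists (f \o g); first exact: increasing_seq_comp.
move=> k; rewrite ltnS leq_eqVlt => /orP[/eqP kq|kq].
  by have -> : k = Ordinal qp by apply: val_inj.
apply/cvg_ex; exists (lim (u^~ k \o f @ \oo)).
exact: cvg_comp (increasing_seq_cvg gi) (fc k kq).
Unshelve. all: end_near. Qed.

Lemma cvg_sumr {R : realType} {T : Type} {F : set_system T} {FF : Filter F} {n : nat}
  (f : 'I_n -> T -> R) (l : 'I_n -> R) :
  (forall i, f i @ F --> l i) -> (fun x => \sum_(i < n) f i x) @ F --> \sum_(i < n) l i.
Proof. by move=> fl; apply: cvg_big => //; exact: add_continuous. Qed.

Lemma cvgXn {R : realType} {T : Type} {F : set_system T} {FF : Filter F}
  {f : T -> R} {a : R} (k : nat) : f @ F --> a -> (fun x => f x ^+ k) @ F --> a ^+ k.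
Proof.
move=> fa; apply: (@continuous_cvg _ _ _ F FF f (fun x : R => x ^+ k) a) => //.
exact: exprn_continuous.
Qed.

Lemma sum_sqr_line_min_orth (R : realFieldType) (n : nat) (e g : 'I_n -> R) :
  (forall s, \sum_i e i ^+ 2 <= \sum_i (e i - s * g i) ^+ 2) ->
  \sum_i e i * g i = 0.
Proof.
move=> emin; set c := \sum_i e i * g i; set q := \sum_i g i ^+ 2.
have q_ge0 : 0 <= q by apply: sumr_ge0 => i _; exact: sqr_ge0.
have expand s : \sum_i (e i - s * g i) ^+ 2 = \sum_i e i ^+ 2 - 2 * s * c + s ^+ 2 * q.
  transitivity (\sum_i (e i ^+ 2 - (2 * s) * (e i * g i) + s ^+ 2 * g i ^+ 2)).
    by apply: eq_bigr => i _; ring.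
  by rewrite big_split sumrB /= -!mulr_sumr.
pose s := c / (q + 1).
have cE : c = s * (q + 1) by rewrite /s mulfVK // lt0r_neq0 // ltr_pwDr.
have := emin s; rewrite expand -subr_ge0 => h.
have : s ^+ 2 * (q + 2) <= 0 by rewrite cE in h; nra.
rewrite pmulr_lle0; last lra.
move=> s_le0; have s0 : s = 0 by apply/eqP; rewrite -sqrf_eq0 eq_le s_le0 sqr_ge0.
by rewrite cE s0 mul0r.
Qed.

Lemma unbounded_near0_seq (R : realType) (g : R -> R) :
  ~ (exists r0 C : R, 0 < r0 /\ 0 < C /\ forall r, 0 < r -> r <= r0 -> g r <= C) ->
  exists rs : nat -> R, forall n, [/\ 0 < rs n, rs n <= n.+1%:R^-1 & n.+1%:R < g (rs n)].
Proof.
move=> unb; suff /choice[rs rsP] : forall n : nat, exists r : R,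
    [/\ 0 < r, r <= n.+1%:R^-1 & n.+1%:R < g r] by exists rs.
move=> n; apply: contrapT => nrs; apply: unb.
exists n.+1%:R^-1, n.+1%:R; split; first by rewrite invr_gt0 ltr0n.
split=> [|r r0 rn]; first by rewrite ltr0n.
by rewrite leNgt; apply/negP => gr; apply: nrs; exists r.
Qed.

Lemma coord_le_norm2 (R : realType) (p : nat) (v : 'cV[R]_p) (k : 'I_p) :
  `|v k 0| <= norm2 v.
Proof.
rewrite -sqrtr_sqr /norm2 ler_sqrt; last by apply: sumr_ge0 => i _; exact: sqr_ge0.
by rewrite (bigD1 k) //= lerDl; apply: sumr_ge0 => i _; exact: sqr_ge0.
Qed.

Lemma norm2_sqr (R : realType) (p : nat) (v : 'cV[R]_p) :
  norm2 v ^+ 2 = \sum_(k < p) v k 0 ^+ 2.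
Proof. by rewrite sqr_sqrtr //; apply: sumr_ge0 => i _; exact: sqr_ge0. Qed.

Definition mdeg (e : nat * nat) : nat := (e.1 + e.2)%N.

Lemma mono_eval_scale (R : comNzRingType) (e : nat * nat) (r x y : R) :
  mono_eval e (r * x, r * y) = r ^+ mdeg e * mono_eval e (x, y).
Proof. by rewrite /mono_eval /mdeg /= !exprMn exprD; ring. Qed.

(* [lap0 e] vanishes unless [e] has degree 2. *)
Lemma lap0_scale (R : nzRingType) (r : R) (e : nat * nat) :
  r ^+ 2 * lap0 e = r ^+ mdeg e * lap0 e.
Proof. by rewrite /lap0 /mdeg; case: ifP => [/orP[]/eqP->|_] //; rewrite !mulr0. Qed.

Definition stencil {R : nzRingType} {p : nat} (xs : 'I_p -> R * R) (v : 'cV[R]_p)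
  (e : nat * nat) : R :=
  \sum_(k < p) v k 0 * mono_eval e (xs k).

Lemma stencilD (R : nzRingType) (p : nat) (xs : 'I_p -> R * R) (v w : 'cV[R]_p) e :
  stencil xs (v + w) e = stencil xs v e + stencil xs w e.
Proof. by rewrite /stencil -big_split; apply: eq_bigr => k _; rewrite mxE mulrDl. Qed.

Lemma stencilZ (R : nzRingType) (p : nat) (xs : 'I_p -> R * R) (c : R) (v : 'cV[R]_p) e :
  stencil xs (c *: v) e = c * stencil xs v e.
Proof. by rewrite /stencil mulr_sumr; apply: eq_bigr => k _; rewrite mxE mulrA. Qed.

Lemma cvg_stencil {R : realType} {p : nat} (xs : 'I_p -> R * R) {T : Type}
  {F : set_system T} {FF : Filter F} {v : T -> 'cV[R]_p} {w : 'cV[R]_p} e :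
  (forall k, (fun x => v x k 0) @ F --> w k 0) ->
  (fun x => stencil xs (v x) e) @ F --> stencil xs w e.
Proof. by move=> vw; apply: cvg_sumr => k; exact: cvgMr_tmp. Qed.

Lemma exact_uptoP (R : realType) (m p : nat) (xs : 'I_p -> R * R) (z : 'cV[R]_p) l :
  exact_upto m xs z l <->
  forall i : 'I_(nmono m), (mdeg (mono i) <= l)%N -> stencil xs z (mono i) = lap0 (mono i).
Proof.
split=> [/allP ex i il | ex].
  by have /implyP/(_ il)/eqP := ex _ (mem_nth (0, 0)%N (ltn_ord i)).
apply/allP => e e_in; apply/implyP => el; apply/eqP.
have e_idx : (index e (mono_list m) < nmono m)%N by rewrite index_mem.
have eE : mono (Ordinal e_idx) = e by rewrite /mono nth_index.
by rewrite -eE; apply: ex; rewrite eE.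
Qed.

Lemma ord_le_exact (R : realType) (m p : nat) (xs : 'I_p -> R * R) (z z' : 'cV[R]_p) :
  (forall l, exact_upto m xs z l -> exact_upto m xs z' l) ->
  (ord m xs z <= ord m xs z')%N.
Proof. by move=> zz'; apply/bigmax_leqP => l /zz' l'; exact: leq_bigmax_cond. Qed.

Section LeastSquares.
Context {R : realType} {m p : nat} (xs : 'I_p -> R * R).

Local Notation Y := (Yvec R m).
Local Notation deg i := (mdeg (mono i)).

Definition scaled_residual (r : R) (v : 'cV[R]_p) (i : 'I_(nmono m)) : R :=
  r ^+ deg i * (lap0 (mono i) - stencil xs v (mono i)).

Lemma scaled_residualE (r : R) (v : 'cV[R]_p) i : r != 0 ->
  r ^+ 2 * (Y - Phi m xs r *m (r ^-2 *: v)) i 0 = scaled_residual r v i.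
Proof.
move=> r_neq0; rewrite /scaled_residual !mxE !mulrBr lap0_scale; congr (_ - _).
rewrite /stencil !mulr_sumr; apply: eq_bigr => k _.
by rewrite !mxE mono_eval_scale; case: (xs k) => a b /=; field.
Qed.

Lemma lsq_scaled_min {r : R} {w : 'cV[R]_p} (v : 'cV[R]_p) :
  0 < r -> is_lsq (Phi m xs r) Y w ->
  \sum_i scaled_residual r (r ^+ 2 *: w) i ^+ 2 <= \sum_i scaled_residual r v i ^+ 2.
Proof.
move=> r_gt0 w_lsq; have r_neq0 : r != 0 by rewrite gt_eqF.
have sum_residualE u : \sum_i scaled_residual r u i ^+ 2
    = r ^+ 4 * \sum_i (Y - Phi m xs r *m (r ^-2 *: u)) i 0 ^+ 2.
  by rewrite mulr_sumr; apply: eq_bigr => i _; rewrite -scaled_residualE //; ring.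
have wE : r ^-2 *: (r ^+ 2 *: w) = w by rewrite scalerA mulVf ?scale1r // expf_neq0.
rewrite !sum_residualE wE; apply: ler_wpM2l; first by rewrite exprn_ge0 // ltW.
by rewrite -!norm2_sqr lerXn2r ?nnegrE ?sqrtr_ge0 //; exact: w_lsq.
Qed.

Lemma lsq_scaled_orth {r : R} {w : 'cV[R]_p} (z : 'cV[R]_p) :
  0 < r -> is_lsq (Phi m xs r) Y w ->
  \sum_i scaled_residual r (r ^+ 2 *: w) i * (r ^+ deg i * stencil xs z (mono i)) = 0.
Proof.
move=> r_gt0 w_lsq; apply: sum_sqr_line_min_orth => s.
rewrite [X in _ <= X](eq_bigr (fun i => scaled_residual r (r ^+ 2 *: w + s *: z) i ^+ 2)).
  exact: lsq_scaled_min.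
by move=> i _; rewrite /scaled_residual stencilD !stencilZ; congr (_ ^+ 2); ring.
Qed.

(* Monomials up to degree [l] contribute nothing on the right, and the others carry at
   least the weight [r^(2 (deg i0 + 1))]. *)
Lemma lsq_exact_residual_bound (r : R) (w z : 'cV[R]_p) (l : nat) (i0 : 'I_(nmono m)) :
  0 < r -> r <= 1 -> is_lsq (Phi m xs r) Y w -> exact_upto m xs z l -> (deg i0 <= l)%N ->
  (lap0 (mono i0) - stencil xs (r ^+ 2 *: w) (mono i0)) ^+ 2 <=
  r ^+ 2 * \sum_(i < nmono m) (lap0 (mono i) - stencil xs z (mono i)) ^+ 2.
Proof.
move=> r_gt0 r_le1 w_lsq /exact_uptoP z_exact i0l.
have term_le : scaled_residual r (r ^+ 2 *: w) i0 ^+ 2 <=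
    \sum_i scaled_residual r (r ^+ 2 *: w) i ^+ 2.
  by rewrite (bigD1 i0) //= lerDl; apply: sumr_ge0 => i _; exact: sqr_ge0.
have z_le : \sum_i scaled_residual r z i ^+ 2 <=
    \sum_(i < nmono m) r ^+ (deg i0).+1 ^+ 2 * (lap0 (mono i) - stencil xs z (mono i)) ^+ 2.
  apply: ler_sum => i _; have [il|li] := leqP (deg i) l.
    by rewrite /scaled_residual z_exact // subrr mulr0 expr0n mulr_ge0 ?sqr_ge0.
  rewrite /scaled_residual exprMn; apply: ler_wpM2r; first exact: sqr_ge0.
  rewrite -!exprM; apply: ler_wiXn2l; [exact: ltW | exact: r_le1 |].
  by rewrite leq_mul2r /=; apply: leq_ltn_trans li.
have := le_trans term_le (le_trans (lsq_scaled_min z r_gt0 w_lsq) z_le).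
have rd_gt0 : 0 < r ^+ deg i0 ^+ 2 by rewrite !exprn_gt0.
rewrite -mulr_sumr /scaled_residual.
by rewrite (exprMn 2) [r ^+ (deg i0).+1]exprSr (exprMn 2) -[_ * r ^+ 2 * _]mulrA ler_pM2l.
Qed.

Lemma lsq_limit_exact {w : R -> 'cV[R]_p} {rs : nat -> R} {eta z : 'cV[R]_p} {l : nat} :
  (forall r, 0 < r -> is_lsq (Phi m xs r) Y (w r)) ->
  (forall j, 0 < rs j) -> rs @ \oo --> 0 ->
  (forall k, (fun j => (rs j ^+ 2 *: w (rs j)) k 0) @ \oo --> eta k 0) ->
  exact_upto m xs z l -> exact_upto m xs eta l.
Proof.
move=> w_lsq rs_gt0 rs0 w_eta z_exact; apply/exact_uptoP => i0 i0l.
set K := \sum_(i < nmono m) (lap0 (mono i) - stencil xs z (mono i)) ^+ 2.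
have res_cvg : (fun j => (lap0 (mono i0) - stencil xs (rs j ^+ 2 *: w (rs j)) (mono i0)) ^+ 2)
    @ \oo --> (lap0 (mono i0) - stencil xs eta (mono i0)) ^+ 2.
  by apply: cvgXn; apply: cvgB; [exact: cvg_cst | exact: cvg_stencil].
have bound_cvg : (fun j => rs j ^+ 2 * K) @ \oo --> 0 ^+ 2 * K.
  by apply: cvgM; [exact: cvgXn | exact: cvg_cst].
rewrite expr0n mul0r in bound_cvg.
have res_le : \forall j \near \oo,
    (lap0 (mono i0) - stencil xs (rs j ^+ 2 *: w (rs j)) (mono i0)) ^+ 2 <= rs j ^+ 2 * K.
  near=> j; apply: lsq_exact_residual_bound z_exact i0l => //; last exact: w_lsq.
  by near: j; exact: cvgr_le 0 rs0 1 ltr01.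
have res_le0 := ler_cvg_to res_cvg bound_cvg res_le.
have : (lap0 (mono i0) - stencil xs eta (mono i0)) ^+ 2 == 0.
  by rewrite eq_le res_le0 sqr_ge0.
by rewrite sqrf_eq0 subr_eq0 eq_sym => /eqP.
Unshelve. all: end_near. Qed.

Lemma Phi1_stencil_inj (z : 'cV[R]_p) : \rank (Phi m xs 1) = p ->
  (forall i : 'I_(nmono m), stencil xs z (mono i) = 0) -> z = 0.
Proof.
move=> Phi_rank z_null.
have Phi_z : Phi m xs 1 *m z = 0.
  apply/matrixP => i j; rewrite [j]ord1 !mxE -[RHS](z_null i).
  by apply: eq_bigr => k _; rewrite mxE mono_eval_scale expr1n mul1r mulrC; case: (xs k).
have Phi_free : row_free (Phi m xs 1)^T by rewrite /row_free mxrank_tr Phi_rank.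
apply: trmx_inj; apply/eqP; rewrite trmx0 -(mulmx_free_eq0 _ Phi_free).
by rewrite -trmx_mul Phi_z trmx0.
Qed.

(* [lsq_scaled_orth] divided by [t r^(2 D)]; the division is exact because
   every [i] that contributes satisfies [D <= deg i]. *)
Lemma lsq_orth_rescaled (r t : R) (w z : 'cV[R]_p) (D : nat) :
  0 < r -> 0 < t -> is_lsq (Phi m xs r) Y w ->
  (forall i : 'I_(nmono m), stencil xs z (mono i) != 0 -> (D <= deg i)%N) ->
  \sum_(i < nmono m) r ^+ (deg i - D) ^+ 2 *
    (lap0 (mono i) / t - stencil xs (t^-1 *: (r ^+ 2 *: w)) (mono i)) *
    stencil xs z (mono i) = 0.
Proof.
move=> r_gt0 t_gt0 w_lsq zD.
have scale_neq0 : r ^+ D ^+ 2 * t != 0 by rewrite mulf_neq0 ?gt_eqF ?exprn_gt0.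
apply: (mulfI scale_neq0); rewrite mulr0 -[RHS](lsq_scaled_orth z r_gt0 w_lsq) mulr_sumr.
apply: eq_bigr => i _; have [-> | z_i] := eqVneq (stencil xs z (mono i)) 0.
  by rewrite !mulr0.
have rdE : r ^+ deg i = r ^+ (deg i - D) * r ^+ D by rewrite -exprD subnK ?zD.
by rewrite /scaled_residual stencilZ rdE; field; rewrite gt_eqF.
Qed.

Lemma lsq_normalized_limit_eq0 (w : nat -> 'cV[R]_p) (rs t : nat -> R) (u : 'cV[R]_p) :
  \rank (Phi m xs 1) = p ->
  (forall j, 0 < rs j) -> (forall j, 0 < t j) ->
  (forall j, is_lsq (Phi m xs (rs j)) Y (w j)) ->
  rs @ \oo --> 0 -> (fun j => (t j)^-1) @ \oo --> 0 ->
  (forall k, (fun j => ((t j)^-1 *: (rs j ^+ 2 *: w j)) k 0) @ \oo --> u k 0) ->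
  u = 0.
Proof.
move=> Phi_rank rs_gt0 t_gt0 w_lsq rs0 t0 w_u; apply/eqP; apply: contraT => u_neq0.
have /existsP[i1 u_i1] : [exists i : 'I_(nmono m), stencil xs u (mono i) != 0].
  apply: contraNT u_neq0 => /existsPn u_null; apply/eqP; apply: Phi1_stencil_inj => // i.
  exact/eqP/negPn/u_null.
have [i2 u_i2 i2_min] :=
  @arg_minnP _ i1 (fun i => stencil xs u (mono i) != 0) (fun i => deg i) u_i1.
pose E j := \sum_(i < nmono m) rs j ^+ (deg i - deg i2) ^+ 2 *
    (lap0 (mono i) / t j - stencil xs ((t j)^-1 *: (rs j ^+ 2 *: w j)) (mono i)) *
    stencil xs u (mono i).
have E0 : E = fun=> 0.
  by apply/funext => j; apply: lsq_orth_rescaled => // i /i2_min.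
pose lowest (i : 'I_(nmono m)) := (0 : R) ^+ (deg i - deg i2) * stencil xs u (mono i).
have E_cvg : E @ \oo --> - \sum_i lowest i ^+ 2.
  rewrite -sumrN (eq_bigr (fun i => (0 : R) ^+ (deg i - deg i2) ^+ 2 *
      (lap0 (mono i) * 0 - stencil xs u (mono i)) * stencil xs u (mono i))); last first.
    by move=> i _; rewrite /lowest; ring.
  apply: cvg_sumr => i; apply: cvgMr_tmp; apply: cvgM; first exact/cvgXn/cvgXn.
  by apply: cvgB; [exact: cvgMl_tmp | exact: cvg_stencil].
have lowest_pos : 0 < \sum_i lowest i ^+ 2.
  rewrite (bigD1 i2) //= /lowest subnn expr0 mul1r.
  apply: (@lt_le_trans _ _ (stencil xs u (mono i2) ^+ 2)).
    by rewrite lt_def sqr_ge0 sqrf_eq0 u_i2.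
  by rewrite lerDl; apply: sumr_ge0 => i _; exact: sqr_ge0.
suff : 0 = - \sum_i lowest i ^+ 2 by move/eqP; rewrite eq_sym oppr_eq0 gt_eqF.
rewrite E0 in E_cvg; exact: (@cvg_unique _ (@Rhausdorff R) _ _ _ _ (cvg_cst 0) E_cvg).
Qed.

Lemma lsq_eta_bounded {omega : R -> 'cV[R]_p} :
  \rank (Phi m xs 1) = p ->
  (forall r, 0 < r -> is_lsq (Phi m xs r) Y (omega r)) ->
  exists r0 C : R, 0 < r0 /\ 0 < C /\
    forall r, 0 < r -> r <= r0 -> norm2 (r ^+ 2 *: omega r) <= C.
Proof.
move=> Phi_rank omega_lsq; apply: contrapT => /unbounded_near0_seq[rs rsP].
pose t n := norm2 (rs n ^+ 2 *: omega (rs n)).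
pose U n := (t n)^-1 *: (rs n ^+ 2 *: omega (rs n)).
have rs_gt0 n : 0 < rs n by have [] := rsP n.
have t_gt0 n : 0 < t n by have [_ _ /(lt_trans _)->] := rsP n.
have sumU n : \sum_k U n k 0 ^+ 2 = 1.
  under eq_bigr do rewrite mxE exprMn.
  by rewrite -mulr_sumr -norm2_sqr exprVn mulVf // expf_neq0 // gt_eqF.
have [f f_incr U_cvg] : exists2 f : nat -> nat, increasing_seq f &
    forall k, cvgn (fun n => U (f n) k 0).
  apply: (@bolzano_weierstrass_fin R p (fun n k => U n k 0) 1) => n k.
  by rewrite -(sqrtr1 R) -(sumU n) coord_le_norm2.
pose u := \col_k lim ((fun n => U (f n) k 0) @ \oo).
have U_u k : (fun n => U (f n) k 0) @ \oo --> u k 0 by rewrite mxE; exact: U_cvg.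
have f_oo := increasing_seq_cvg f_incr.
have rs0 : rs @ \oo --> 0.
  apply: (@squeeze_cvgr _ _ _ _ (fun=> 0) harmonic); last exact: cvg_harmonic.
    by apply: nearW => n; have [/ltW-> rs_le _] := rsP n.
  exact: cvg_cst.
have t0 : (fun n => (t n)^-1) @ \oo --> 0.
  apply: (@squeeze_cvgr _ _ _ _ (fun=> 0) harmonic); last exact: cvg_harmonic.
    apply: nearW => n; have [_ _ t_gt] := rsP n.
    by rewrite invr_ge0 ltW //= lef_pV2 ?posrE ?ltr0n // ltW.
  exact: cvg_cst.
have u0 : u = 0.
  apply: (@lsq_normalized_limit_eq0 (omega \o rs \o f) (rs \o f) (t \o f)) => //.
  - by move=> j; exact: rs_gt0.
  - by move=> j; exact: t_gt0.
  - by move=> j; apply: omega_lsq; exact: rs_gt0.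
  - exact: (cvg_comp _ _ f_oo rs0).
  - exact: (cvg_comp _ _ f_oo t0).
have : \sum_k u k 0 ^+ 2 = 1.
  have sum_cvg : (fun n => \sum_k U (f n) k 0 ^+ 2) @ \oo --> \sum_k u k 0 ^+ 2.
    by apply: cvg_sumr => k; exact: cvgXn.
  have one_cvg : (fun n => \sum_k U (f n) k 0 ^+ 2) @ \oo --> (1 : R).
    by under eq_cvg do rewrite sumU; exact: cvg_cst.
  exact: (@cvg_unique _ (@Rhausdorff R) _ _ _ _ sum_cvg one_cvg).
by rewrite u0 big1 => [/esym/eqP|k _]; rewrite ?oner_eq0 // mxE expr0n.
Qed.

End LeastSquares.

Theorem lemma3p2 (R : realType) (p m : nat) (xs : 'I_p -> R * R)
  (omega : R -> 'cV[R]_p) :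
  (1 <= p)%N -> (2 <= m)%N ->
  \rank (Phi m xs 1) = p ->
  (forall r : R, 0 < r -> is_lsq (Phi m xs r) (Yvec R m) (omega r)) ->
  let eta := fun r : R => (r ^+ 2) *: omega r in
  (exists r0 : R, exists C : R, 0 < r0 /\ 0 < C /\
     forall r : R, 0 < r -> r <= r0 -> norm2 (eta r) <= C)
  /\
  (forall (rs : nat -> R) (etalim : 'cV[R]_p),
     (forall j, 0 < rs j) ->
     rs @ \oo --> 0 ->
     (forall k : 'I_p, (fun j : nat => (eta (rs j) k 0 : R)) @ \oo --> (etalim k 0 : R)) ->
     forall zeta : 'cV[R]_p, (ord m xs zeta <= ord m xs etalim)%N).
Proof.
move=> _ _ Phi_rank omega_lsq eta; split; first exact: lsq_eta_bounded Phi_rank omega_lsq.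
move=> rs etalim rs_gt0 rs0 eta_cvg zeta; apply: ord_le_exact => l.
exact: lsq_limit_exact omega_lsq rs_gt0 rs0 eta_cvg.
Qed.
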